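(* Let $\mathcal E=\widetilde{\Omega^1_D}(\mathcal A)$ be the bimodule of one-forms of a spectral triple $(\mathcal A,\mathcal H,D)$. Suppose $\mathcal E$ is free of finite rank as a right $\mathcal A$-module, $\mathcal E=\mathbb C^n\otimes_{\mathbb C}\mathcal A$, with left module structure $a(e_i\otimes b)=e_i\otimes ab$ for a basis $e_1,\dots,e_n$ of $\mathbb C^n$ and $a,b\in\mathcal A$. Then $\mathcal E$ satisfies Assumption III.
   Context: $\mathcal E$ is the span in $B(\mathcal H)$ of $a[D,b]$; $\mathcal Z(\mathcal E)=\{e:ea=ae\ \forall a\in\mathcal A\}$, $\mathcal Z(\mathcal A)$ the center of $\mathcal A$. Assumption III: $\mathcal Z(\mathcal E)$ is finitely generated projective over $\mathcal Z(\mathcal A)$ and the map $\mathcal Z(\mathcal E)\otimes_{\mathcal Z(\mathcal A)}\mathcal A\to\mathcal E$, $e\otimes a\mapsto ea$, is an isomorphism of vector spaces. *)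

From HB Require Import structures.
From mathcomp Require Import all_boot all_order all_algebra.
From mathcomp Require Import complex.
From mathcomp Require Import reals.
Set Implicit Arguments. Unset Strict Implicit. Unset Printing Implicit Defensive.
Import Order.TTheory GRing.Theory Num.Theory.
Local Open Scope ring_scope.

Section Defs.
(* C : the scalars (in the theorem, the complex numbers R[i]);
   B : a C-algebra standing for B(H).  Subsets of B are predicates B -> Prop. *)
Variables (C : comNzRingType) (B : algType C).

Definition unital_subalg (A : B -> Prop) : Prop :=
  [/\ A 1, forall c x, A x -> A (c *: x),
      forall x y, A x -> A y -> A (x + y) &
      forall x y, A x -> A y -> A (x * y)].

(* d b plays the role of the commutator [D,b] (b in A): it is C-linear
   on A and satisfies the Leibniz rule [D,bc] = [D,b]c + b[D,c]. *)
Definition commutator_like (A : B -> Prop) (d : B -> B) : Prop :=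
  [/\ forall c x, A x -> d (c *: x) = c *: d x,
      forall x y, A x -> A y -> d (x + y) = d x + d y &
      forall x y, A x -> A y -> d (x * y) = d x * y + x * d y].

(* E = span in B of the a [D,b], a, b in A (scalars are absorbed in a) *)
Definition oneforms (A : B -> Prop) (d : B -> B) : B -> Prop :=
  fun e => exists s : seq (B * B)%type,
      (forall p, p \in s -> A p.1 /\ A p.2) /\
      e = \sum_(p <- s) p.1 * d p.2.

Definition centralizer_in (A E : B -> Prop) : B -> Prop :=
  fun e => E e /\ forall a, A a -> e * a = a * e.

Definition center_of (A : B -> Prop) : B -> Prop := centralizer_in A A.

(* E is free of finite rank as a right A-module, E = C^n (x)_C A (= A^n), with
   left structure a (e_i (x) b) = e_i (x) ab: phi is a C-linear bijection
   A^n -> E which is a morphism of A-bimodules, A acting on A^n by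
   multiplication in each coordinate on both sides.  (Elements of A^n are
   functions 'I_n -> B with values in A.) *)
Definition free_diag_bimodule (A E : B -> Prop) : Prop :=
  exists n : nat, exists phi : ('I_n -> B) -> B,
  [/\ forall f, (forall i, A (f i)) -> E (phi f),
      forall f g, (forall i, A (f i)) -> (forall i, A (g i)) ->
        phi (fun i => f i + g i) = phi f + phi g &
      forall c f, (forall i, A (f i)) -> phi (fun i => c *: f i) = c *: phi f]
  /\ [/\ forall f b, (forall i, A (f i)) -> A b ->
        phi (fun i => f i * b) = phi f * b,
      forall a f, A a -> (forall i, A (f i)) ->
        a * phi f = phi (fun i => a * f i),
      forall f g, (forall i, A (f i)) -> (forall i, A (g i)) ->
        phi f = phi g -> forall i, f i = g i &
      forall e, E e -> exists2 f, (forall i, A (f i)) & phi f = e].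

(* M (a subset of B, a module over the commutative ring Z subset of B acting
   by right multiplication) is finitely generated projective over Z: it is a
   direct summand of a free module Z^m of finite rank, i.e. there are
   Z-linear maps pi : Z^m -> M and s : M -> Z^m with pi o s = id_M. *)
Definition fg_projective (Z M : B -> Prop) : Prop :=
  exists m : nat, exists pi : ('I_m -> B) -> B, exists s : B -> ('I_m -> B),
  [/\ forall u, (forall i, Z (u i)) -> M (pi u),
      forall u v, (forall i, Z (u i)) -> (forall i, Z (v i)) ->
        pi (fun i => u i + v i) = pi u + pi v &
      forall u z, (forall i, Z (u i)) -> Z z ->
        pi (fun i => u i * z) = pi u * z]
  /\ [/\ forall e i, M e -> Z (s e i),
      forall e e', M e -> M e' -> s (e + e') = (fun i => s e i + s e' i),
      forall e z, M e -> Z z -> s (e * z) = (fun i => s e i * z) &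
      forall e, M e -> pi (s e) = e].

Definition balanced (Z M A : B -> Prop) (V : zmodType) (beta : B -> B -> V)
  : Prop :=
  [/\ forall e e' a, M e -> M e' -> A a ->
        beta (e + e') a = beta e a + beta e' a,
      forall e a a', M e -> A a -> A a' ->
        beta e (a + a') = beta e a + beta e a' &
      forall e z a, M e -> Z z -> A a ->
        beta (e * z) a = beta e (z * a)].

(* The map M (x)_Z A -> E, e (x) a |-> e a, is well defined (lands in E) and
   is an isomorphism, stated through the universal property of the tensor
   product: every Z-balanced biadditive map beta out of M x A factors
   uniquely as beta e a = f (e a) with f additive on E. *)
Definition mult_map_iso (Z M A E : B -> Prop) : Prop :=
  (forall e a, M e -> A a -> E (e * a)) /\
  forall (V : zmodType) (beta : B -> B -> V), balanced Z M A beta ->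
    (exists f : B -> V,
        (forall x y, E x -> E y -> f (x + y) = f x + f y) /\
        (forall e a, M e -> A a -> f (e * a) = beta e a)) /\
    (forall f g : B -> V,
        (forall x y, E x -> E y -> f (x + y) = f x + f y) ->
        (forall x y, E x -> E y -> g (x + y) = g x + g y) ->
        (forall e a, M e -> A a -> f (e * a) = beta e a) ->
        (forall e a, M e -> A a -> g (e * a) = beta e a) ->
        forall x, E x -> f x = g x).

Definition assumption_III (A E : B -> Prop) : Prop :=
  fg_projective (center_of A) (centralizer_in A E) /\
  mult_map_iso (center_of A) (centralizer_in A E) A E.

End Defs.

(* If E is A^n as a bimodule, the coordinates of an element of Z(E) lie in
   Z(A), so Z(E) = Z(A)^n with basis the images of the unit vectors, which are
   central.  Every x in E is then the sum of (image of unit vector i) * x_i, which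
   gives both the projectivity of Z(E) and the factorisation of balanced maps
   through E = Z(E) (x)_Z(A) A. *)
From HB Require Import structures.
From mathcomp Require Import all_boot all_order all_algebra.
From mathcomp Require Import complex.
From mathcomp Require Import reals.
From Stdlib Require Import ClassicalEpsilon FunctionalExtensionality.
Set Implicit Arguments. Unset Strict Implicit. Unset Printing Implicit Defensive.
Import GRing.Theory.
Local Open Scope ring_scope.

Lemma additive_big_closed (U V : zmodType) (I : Type) (P : U -> Prop)
    (h : U -> V) (r : seq I) (x : I -> U) :
  P 0 -> (forall u v, P u -> P v -> P (u + v)) ->
  (forall u v, P u -> P v -> h (u + v) = h u + h v) ->
  (forall i, P (x i)) ->
  P (\sum_(i <- r) x i) /\ h (\sum_(i <- r) x i) = \sum_(i <- r) h (x i).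
Proof.
move=> P0 PD hD Px.
have h0 : h 0 = 0 by apply: (addrI (h 0)); rewrite -hD // !addr0.
elim: r => [|a r [IHP IHh]]; rewrite ?big_nil ?big_cons; split => //.
  exact: PD.
by rewrite hD // IHh.
Qed.

Section FreeDiagonalBimodule.

Variables (C : comNzRingType) (B : algType C) (A E : B -> Prop).
Variables (n : nat) (phi : ('I_n -> B) -> B).

Local Notation in_A f := (forall i, A (f i)).

Hypotheses (A1 : A 1) (A_scale : forall c x, A x -> A (c *: x))
  (A_add : forall x y, A x -> A y -> A (x + y))
  (A_mul : forall x y, A x -> A y -> A (x * y)).

Hypotheses (phi_E : forall f, in_A f -> E (phi f))
  (phi_add : forall f g, in_A f -> in_A g ->
     phi (fun i => f i + g i) = phi f + phi g)
  (phi_mulr : forall f b, in_A f -> A b -> phi (fun i => f i * b) = phi f * b)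
  (mul_phi : forall a f, A a -> in_A f -> a * phi f = phi (fun i => a * f i))
  (phi_inj : forall f g, in_A f -> in_A g -> phi f = phi g ->
     forall i, f i = g i)
  (phi_surj : forall e, E e -> exists2 f, in_A f & phi f = e).

Lemma subalg0 : A 0.
Proof. by rewrite -(scale0r (1 : B)); apply: A_scale. Qed.

Lemma phi0 : phi (fun _ => 0) = 0.
Proof.
have A0 : in_A (fun _ : 'I_n => 0) by move=> _; apply: subalg0.
apply: (addrI (phi (fun _ => 0))); rewrite -phi_add // [RHS]addr0.
by congr phi; apply: functional_extensionality => i; rewrite addr0.
Qed.

Lemma E0 : E 0.
Proof. by rewrite -phi0; apply: phi_E => _; apply: subalg0. Qed.

Lemma E_add x y : E x -> E y -> E (x + y).
Proof.
move=> /phi_surj [f Af <-] /phi_surj [g Ag <-].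
by rewrite -phi_add //; apply: phi_E => i; apply: A_add.
Qed.

Lemma E_mulr x a : E x -> A a -> E (x * a).
Proof.
move=> /phi_surj [f Af <-] Aa.
by rewrite -phi_mulr //; apply: phi_E => i; apply: A_mul.
Qed.

(* Off E the coordinates are an arbitrary junk value. *)
Definition coord (e : B) : 'I_n -> B :=
  epsilon (inhabits (fun _ => 0)) (fun f => in_A f /\ phi f = e).

Lemma coordP e : E e -> in_A (coord e) /\ phi (coord e) = e.
Proof.
move=> /phi_surj [f Af fe].
exact: (epsilon_spec _ (fun f => in_A f /\ phi f = e) (ex_intro _ f (conj Af fe))).
Qed.

Lemma coord_in e i : E e -> A (coord e i).
Proof. by case/coordP. Qed.

Lemma coordK e : E e -> phi (coord e) = e.
Proof. by case/coordP. Qed.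

Lemma coord_eq e f : E e -> in_A f -> phi f = e -> coord e = f.
Proof.
move=> Ee Af fe; apply: functional_extensionality.
by apply: phi_inj => //; [move=> i; apply: coord_in | rewrite coordK].
Qed.

Lemma coordD x y : E x -> E y -> coord (x + y) = (fun i => coord x i + coord y i).
Proof.
move=> Ex Ey; apply: coord_eq; first exact: E_add.
  by move=> i; apply: A_add; apply: coord_in.
by rewrite phi_add ?coordK // => i; apply: coord_in.
Qed.

Lemma coordMr x a : E x -> A a -> coord (x * a) = (fun i => coord x i * a).
Proof.
move=> Ex Aa; apply: coord_eq; first exact: E_mulr.
  by move=> i; apply: A_mul => //; apply: coord_in.
by rewrite phi_mulr ?coordK // => i; apply: coord_in.
Qed.

Lemma center_coord e i : centralizer_in A E e -> center_of A (coord e i).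
Proof.
move=> [Ee Ce]; split; first exact: coord_in.
move=> b Ab; move: i; apply: phi_inj.
- by move=> i; apply: A_mul => //; apply: coord_in.
- by move=> i; apply: A_mul => //; apply: coord_in.
by rewrite phi_mulr -?mul_phi ?coordK ?Ce // => i; apply: coord_in.
Qed.

Lemma centralizer_phi u :
  (forall i, center_of A (u i)) -> centralizer_in A E (phi u).
Proof.
move=> Zu; have Au : in_A u by move=> i; case: (Zu i).
split=> [|a Aa]; first exact: phi_E.
rewrite -phi_mulr // mul_phi //; congr phi.
by apply: functional_extensionality => i; case: (Zu i) => _ ->.
Qed.

Lemma centralizer0 : centralizer_in A E 0.
Proof. by split=> [|a _]; rewrite ?mul0r ?mulr0 //; apply: E0. Qed.

Lemma centralizer_add x y :
  centralizer_in A E x -> centralizer_in A E y -> centralizer_in A E (x + y).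
Proof.
move=> [Ex Cx] [Ey Cy]; split; first exact: E_add.
by move=> a Aa; rewrite mulrDl mulrDr Cx // Cy.
Qed.

Lemma centralizer_mulr x z :
  centralizer_in A E x -> center_of A z -> centralizer_in A E (x * z).
Proof.
move=> [Ex Cx] [Az Cz]; split; first exact: E_mulr.
by move=> a Aa; rewrite -mulrA Cz // mulrA Cx // mulrA.
Qed.

Definition unit_vec (i : 'I_n) : 'I_n -> B := fun j => (j == i)%:R.

Lemma center_unit_vec i j : center_of A (unit_vec i j).
Proof.
split=> [|a _]; last by rewrite /unit_vec commr_nat.
by rewrite /unit_vec; case: (j == i); [apply: A1 | apply: subalg0].
Qed.

Lemma basis_central i : centralizer_in A E (phi (unit_vec i)).
Proof. by apply: centralizer_phi => j; apply: center_unit_vec. Qed.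

Lemma phi_sum (r : seq 'I_n) (g : 'I_n -> 'I_n -> B) :
  (forall i, in_A (g i)) ->
  in_A (fun j => \sum_(i <- r) g i j) /\
  phi (fun j => \sum_(i <- r) g i j) = \sum_(i <- r) phi (g i).
Proof.
move=> Ag; elim: r => [|a r [IA IP]].
  split=> [j|]; first by rewrite big_nil; apply: subalg0.
  rewrite [RHS]big_nil -[RHS]phi0; congr phi.
  by apply: functional_extensionality => j; rewrite big_nil.
split=> [j|]; first by rewrite big_cons; apply: A_add.
rewrite big_cons -IP -phi_add //; congr phi.
by apply: functional_extensionality => j; rewrite big_cons.
Qed.

Lemma phi_decomp h : in_A h -> phi h = \sum_(i < n) phi (unit_vec i) * h i.
Proof.
move=> Ah; have Ag i j : A (unit_vec i j * h i).
  by apply: A_mul => //; case: (center_unit_vec i j).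
transitivity (phi (fun j => \sum_(i < n) unit_vec i j * h i)).
  congr phi; apply: functional_extensionality => j.
  rewrite (bigD1 j) //= /unit_vec eqxx mul1r big1 ?addr0 // => i ne.
  by rewrite eq_sym (negbTE ne) mul0r.
have [_ ->] := @phi_sum (index_enum 'I_n) (fun i j => unit_vec i j * h i) Ag.
by apply: eq_bigr => i _; rewrite phi_mulr // => j; case: (center_unit_vec i j).
Qed.

Lemma coord_decomp x : E x -> x = \sum_(i < n) phi (unit_vec i) * coord x i.
Proof.
by move=> Ex; rewrite -{1}(coordK Ex) phi_decomp // => i; apply: coord_in.
Qed.

Lemma decomp_term_E x i : E x -> E (phi (unit_vec i) * coord x i).
Proof.
by move=> Ex; apply: E_mulr; [case: (basis_central i) | apply: coord_in].
Qed.

Lemma centralizer_fg_projective :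
  fg_projective (center_of A) (centralizer_in A E).
Proof.
exists n, phi, coord; split; split.
- exact: centralizer_phi.
- by move=> u v Zu Zv; apply: phi_add => i; [case: (Zu i) | case: (Zv i)].
- by move=> u z Zu [Az _]; apply: phi_mulr => // i; case: (Zu i).
- by move=> e i Ze; apply: center_coord.
- by move=> e e' [Ee _] [Ee' _]; apply: coordD.
- by move=> e z [Ee _] [Az _]; apply: coordMr.
- by move=> e [Ee _]; apply: coordK.
Qed.

Lemma balanced_factorization (V : zmodType) (beta : B -> B -> V) :
  balanced (center_of A) (centralizer_in A E) A beta ->
  exists f : B -> V,
    (forall x y, E x -> E y -> f (x + y) = f x + f y) /\
    (forall e a, centralizer_in A E e -> A a -> f (e * a) = beta e a).
Proof.
move=> [bD1 bD2 bB].
exists (fun x => \sum_(i < n) beta (phi (unit_vec i)) (coord x i)); split.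
  move=> x y Ex Ey; rewrite coordD // -big_split /=; apply: eq_bigr => i _.
  by apply: bD2; [apply: basis_central | apply: coord_in | apply: coord_in].
move=> e a Ze Aa; have [Ee _] := Ze.
rewrite coordMr // {2}(coord_decomp Ee).
have [_ ->] := additive_big_closed (index_enum 'I_n) centralizer0
  centralizer_add (fun u v Pu Pv => bD1 u v a Pu Pv Aa)
  (fun i => centralizer_mulr (basis_central i) (center_coord i Ze)).
apply: eq_bigr => i _; rewrite bB //; first exact: basis_central.
exact: center_coord.
Qed.

Lemma additive_eq_on_E (V : zmodType) (f g : B -> V) :
  (forall x y, E x -> E y -> f (x + y) = f x + f y) ->
  (forall x y, E x -> E y -> g (x + y) = g x + g y) ->
  (forall e a, centralizer_in A E e -> A a -> f (e * a) = g (e * a)) ->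
  forall x, E x -> f x = g x.
Proof.
move=> fD gD fg x Ex; rewrite (coord_decomp Ex).
have [_ ->] := additive_big_closed (index_enum 'I_n) E0 E_add fD
  (fun i => decomp_term_E i Ex).
have [_ ->] := additive_big_closed (index_enum 'I_n) E0 E_add gD
  (fun i => decomp_term_E i Ex).
by apply: eq_bigr => i _; apply: fg; [apply: basis_central | apply: coord_in].
Qed.

Lemma free_mult_map_iso :
  mult_map_iso (center_of A) (centralizer_in A E) A E.
Proof.
split=> [e a [Ee _] Aa | V beta bal]; first exact: E_mulr.
split; first exact: balanced_factorization.
move=> f g fD gD fb gb; apply: additive_eq_on_E => // e a Ze Aa.
by rewrite fb // gb.
Qed.

End FreeDiagonalBimodule.

Lemma free_diag_bimodule_assumption_III (C : comNzRingType) (B : algType C)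
    (A E : B -> Prop) :
  unital_subalg A -> free_diag_bimodule A E -> assumption_III A E.
Proof.
move=> [A1 A_scale A_add A_mul] [n [phi [[phi_E phi_add _] H]]].
have [phi_mulr mul_phi phi_inj phi_surj] := H.
split.
  exact (centralizer_fg_projective A_add A_mul phi_E phi_add phi_mulr mul_phi
    phi_inj phi_surj).
exact (free_mult_map_iso A1 A_scale A_add A_mul phi_E phi_add phi_mulr mul_phi
  phi_inj phi_surj).
Qed.

Theorem corollary4p18 (R : realType) (B : algType R[i]) (A : B -> Prop)
    (d : B -> B) :
  unital_subalg A -> commutator_like A d ->
  free_diag_bimodule A (oneforms A d) ->
  assumption_III A (oneforms A d).
Proof.
move=> HA _ Hfree; exact: free_diag_bimodule_assumption_III HA Hfree.
Qed.
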